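(* Consider the triggered urn model described in the context, with trigger probabilities $(p_n)_{n\ge1}\subset(0,1)$ and the convention $p_0=1$. Let $C_n=\sum_{i=0}^{n-1}B_i$ be the number of distinct colors present in the urn at time $n$, and $C_\infty=\sup_n C_n$. Then: (1) If $\sum_{n=0}^\infty p_n<\infty$, then $C_\infty<\infty$ almost surely. (2) If $\sum_{n=0}^\infty p_n=\infty$, then $C_\infty=\infty$ almost surely and $C_n\big/\sum_{i=0}^{n-1}p_i\to 1$ almost surely. In particular, if moreover $\sum_{n=1}^\infty(1-p_n)<\infty$, then there exists an (almost surely finite) random time $N$ such that for every time $n\ge N$ a new color is observed; hence each color is observed only a finite number of times, and only finitely many colors end up being observed more than once.
   Context: Triggered (FAQ) urn model. The urn is empty at time $0$. Let $B_0=1$ and let $(B_n)_{n\ge1}$ be independent Bernoulli random variables with $\Pr(B_n=1)=p_n\in(0,1)$ (write $p_0=1$); the $B$'s are independent of everything else in the construction. Let $F:[1,\infty)\to[0,\infty)$ be strictly increasing with $F(1)>0$ (the update function). Colors are labelled $1,2,\dots$ in order of first appearance, and a history sequence $\mathcal S=(S_n)_{n\ge1}$ records one color per time step. For a color $c$, $K_{n,c}$ denotes the number of times $c$ has been registered in $\mathcal S$ up to and including time $n$; at time $n$ the urn contains, for each color $c$ already present, a weight (number of balls) $F(K_{n,c})$. At each time $n\ge1$: if $B_{n-1}=1$ (trigger), a new color (not yet present) is added with weight $F(1)$ and registered in $\mathcal S$; if $B_{n-1}=0$, a color $c$ among those present is drawn with probability $F(K_{n-1,c})/\sum_{c'}F(K_{n-1,c'})$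 (sum over colors present at time $n-1$), it is registered in $\mathcal S$, and its weight becomes $F(K_{n,c})$. *)

From HB Require Import structures.
From mathcomp Require Import all_boot all_order all_algebra.
From mathcomp Require Import all_classical all_reals all_analysis.
Set Implicit Arguments. Unset Strict Implicit. Unset Printing Implicit Defensive.
Import Order.TTheory GRing.Theory Num.Theory.
Local Open Scope ring_scope.

(* State: [c] = number of colours currently present (colours are 1..c),
   [K j] = number of times colour j has been registered so far.
   [bs] = (B_0, ..., B_{N-1}), [ss] = (S_1, ..., S_N). *)
Fixpoint urn_path_factor (R : realType) (F : R -> R) (c : nat) (K : nat -> nat)
    (bs : seq bool) (ss : seq nat) : R :=
  match bs, ss with
  | b :: bs', s :: ss' =>
    if b then
      (if s == c.+1 then 1 else 0) *
      urn_path_factor F c.+1 (fun j => if j == c.+1 then 1%N else K j) bs' ss'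
    else
      (if (1 <= s <= c)%N
       then F (K s)%:R / (\sum_(1 <= j < c.+1) F (K j)%:R) else 0) *
      urn_path_factor F c (fun j => if j == s then (K j).+1 else K j) bs' ss'
  | _, _ => 1
  end.

Definition urn_path_prob (R : realType) (p : nat -> R) (F : R -> R)
    (bs : seq bool) (ss : seq nat) : R :=
  (\prod_(i < size bs) (if nth false bs i then p i else 1 - p i)) *
  urn_path_factor F 0 (fun _ => 0%N) bs ss.

Definition urn_cylinder (T : Type) (B : nat -> T -> bool) (S : nat -> T -> nat)
    (bs : seq bool) (ss : seq nat) : set T :=
  [set w | (forall i, (i < size bs)%N -> B i w = nth false bs i) /\
           (forall i, (i < size ss)%N -> S i.+1 w = nth 0%N ss i)].

Definition ncolors (T : Type) (B : nat -> T -> bool) (n : nat) (w : T) : nat :=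
  \sum_(i < n) (B i w : nat).

From HB Require Import structures.
From mathcomp Require Import all_boot all_order all_algebra.
From mathcomp Require Import all_classical all_reals all_analysis.
From mathcomp Require Import ring lra zify.
Import Order.TTheory GRing.Theory Num.Theory numFieldNormedType.Exports.
Local Open Scope classical_set_scope.
Local Open Scope ring_scope.
Set Implicit Arguments. Unset Strict Implicit. Unset Printing Implicit Defensive.

(* Summing the urn factor of a trajectory over all draw sequences gives 1, so the trigger
   sequence (B_0, ..., B_{n-1}) has the product Bernoulli law: C_n = B_0 + ... + B_{n-1} has
   mean s_n = p_0 + ... + p_{n-1} and variance at most s_n.  Part (1) and the last part are
   Borel-Cantelli for the events {B_n = 1} and {B_n = 0}; after the last non-trigger every
   draw is the newest colour, hence exceeds all previous draws.  For the law of large numbers,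
   Chebyshev bounds the probability that |C_n - s_n| > s_n/(j+1) by (j+1)^2/s_n.  Along the
   first times n_k at which s_n reaches k^2 these bounds are summable, so C_{n_k}/s_{n_k} -> 1
   almost surely; as C_n is nondecreasing and s_{n_k} = k^2 + O(1), this extends to all n. *)

Lemma sum_inv_sq_le (R : realType) n :
  \sum_(k < n.+1) ((maxn 1 (k * k))%:R : R)^-1 <= 3 - 2 / n.+1%:R.
Proof.
elim: n => [|n IH]; first by rewrite big_ord1 /= invr1; lra.
rewrite big_ord_recr /= (maxn_idPr _) ?muln_gt0 // natrM -[n.+2%:R]natr1.
set a := n.+1%:R; have a_ge1 : 1 <= a by rewrite ler1n.
apply: le_trans (lerD IH (lexx _)) _; rewrite -subr_ge0.
have -> : 3 - 2 / (a + 1) - (3 - 2 / a + (a * a)^-1) = (a - 1) / (a * a * (a + 1)).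
  by field; rewrite !gt_eqF //; lra.
by rewrite divr_ge0 //; nra.
Qed.

Lemma nneseries_inv_sq_lty (R : realType) (u : nat -> \bar R) (c : R) :
  (forall k, 0 <= u k)%E -> (forall k, u k <= (c / (maxn 1 (k * k))%:R)%:E)%E ->
  (\sum_(0 <= k <oo) u k < +oo)%E.
Proof.
move=> u_ge0 u_le; have c_ge0 : 0 <= c.
  by have := le_trans (u_ge0 0%N) (u_le 0%N); rewrite lee_fin /= divr1.
apply: (@le_lt_trans _ _ (3 * c)%:E); last exact: ltry.
apply: lime_le; first exact: is_cvg_nneseries.
apply: nearW => -[|n]; first by rewrite big_geq // lee_fin mulr_ge0.
apply: (@le_trans _ _ (\sum_(0 <= k < n.+1) (c / (maxn 1 (k * k))%:R)%:E)%E).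
  by apply: lee_sum => k _; exact: u_le.
rewrite sumEFin lee_fin big_mkord -mulr_sumr.
rewrite mulrC ler_wpM2r // (le_trans (sum_inv_sq_le _ n)) // lerBlDr lerDl.
by rewrite divr_ge0.
Qed.

Section MeasureFacts.
Context d (T : measurableType d) (R : realType) (mu : {measure set T -> \bar R}).

Lemma measure_big_setU_seq (I : choiceType) (s : seq I) (Q : pred I) (A : I -> set T) :
  uniq s -> (forall i, i \in s -> measurable (A i)) ->
  {in s &, forall i j w, A i w -> A j w -> i = j} ->
  mu (\big[setU/set0]_(i <- s | Q i) A i) = (\sum_(i <- s | Q i) mu (A i))%E.
Proof.
elim: s => [|i s IH]; first by rewrite !big_nil measure0.
move=> /andP[i_s s_uniq] mA disjA.
have mAs j : j \in s -> measurable (A j) by move=> js; apply: mA; rewrite inE js orbT.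
have disjAs : {in s &, forall i j w, A i w -> A j w -> i = j}.
  by move=> j k js ks; apply: disjA; rewrite inE ?js ?ks orbT.
rewrite !big_cons; case: ifP => Qi; last exact: IH.
have mAi : measurable (A i) by apply: mA; rewrite mem_head.
have mU : measurable (\big[setU/set0]_(j <- s | Q j) A j).
  by rewrite big_seq_cond; apply: bigsetU_measurable => j /andP[/mAs].
rewrite measureU //; first by congr (_ + _)%E; apply: IH.
rewrite -bigcup_seq_cond; apply/seteqP; split => // w [Aiw [j /andP[js _] Ajw]].
have ij : i = j by apply: (disjA i j _ _ w) => //; rewrite ?mem_head // inE js orbT.
by move: i_s; rewrite ij js.
Qed.

Lemma ae_eventually_notin (E : nat -> set T) : (forall k, measurable (E k)) ->
  (\sum_(0 <= k <oo) mu (E k) < +oo)%E ->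
  {ae mu, forall w, exists m, forall k, (m <= k)%N -> ~ E k w}.
Proof.
move=> mE sumE; exists (lim_sup_set E); split.
- by apply: bigcap_measurable => // j _; apply: bigcup_measurable => k _.
- exact: lim_sup_set_cvg0.
- move=> w /= notev n _; apply: contrapT => Ew; apply: notev.
  by exists n => k nk Ekw; apply: Ew; exists k.
Qed.

End MeasureFacts.

(* [x] is the integer k with k^2 <= s < (k+1)^2; [sa] and [sb] are the values of the mean at
   the first times it reaches k^2 and (k+1)^2, where the counts [Ca] and [Cb] have relative
   error at most 1/y. *)
Lemma ratio_sandwich (R : realType) (e K0 x y s sa sb Ca Cn Cb : R) :
  0 < e -> 16 / e < K0 -> K0 <= x -> 1 <= x -> 4 / e < y -> 1 <= y ->
  x * x <= sa -> (x + 1) * (x + 1) <= sb -> sb <= (x + 1) * (x + 1) + 1 ->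
  x * x <= s -> s < (x + 1) * (x + 1) -> Ca <= Cn -> Cn <= Cb ->
  `|Ca - sa| <= sa / y -> `|Cb - sb| <= sb / y ->
  `|1 - Cn / s| <= e.
Proof.
move=> e_gt0 K0_gt x_ge x_ge1 y_gt y_ge1 sa_ge sb_ge sb_le s_ge s_lt Ca_le Cb_ge.
have ex_ge16 : 16 <= e * x.
  have : 16 < K0 * e by rewrite -ltr_pdivrMr.
  have : e * K0 <= e * x by rewrite ler_pM2l.
  lra.
set dl := y^-1.
have dl_gt0 : 0 < dl by rewrite invr_gt0; lra.
have dl_le1 : dl <= 1 by rewrite invf_le1; lra.
have dl_small : 4 * dl < e.
  have : 4 < y * e by rewrite -ltr_pdivrMr.
  rewrite -(ltr_pM2l dl_gt0) mulrA mulVf ?mul1r; [lra | rewrite gt_eqF //; lra].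
rewrite !ler_norml => /andP[Ca_lo Ca_hi] /andP[Cb_lo Cb_hi].
have xx_ge1 : 1 <= x * x by rewrite mulr_ege1.
have s_gt0 : 0 < s by lra.
have -> : 1 - Cn / s = (s - Cn) / s by field; rewrite gt_eqF.
have h1 : dl * (x * x) <= dl * s by rewrite ler_pM2l.
have h2 : 16 * x <= e * s.
  have : e * (x * x) <= e * s by rewrite ler_pM2l.
  have : 16 * x <= (e * x) * x by rewrite ler_pM2r; lra.
  lra.
have h3 : dl * s <= e / 4 * s by rewrite ler_pM2r; lra.
have h4 : sb * dl <= ((x + 1) * (x + 1) + 1) * dl by rewrite ler_pM2r.
have h5 : 0 <= (sa - x * x) * (1 - dl) by rewrite mulr_ge0; lra.
have h6 : dl * x <= x by rewrite -[leRHS]mul1r ler_pM2r; lra.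
by rewrite ler_pdivlMr // ler_pdivrMr //; apply/andP; split; nra.
Qed.

Section SquareTimes.
Variables (R : realType) (s : nat -> R).
Hypotheses (s0 : s 0%N = 0) (s_incr : forall n, s n <= s n.+1 <= s n + 1).
Hypothesis s_unbounded : forall x : R, exists n, x <= s n.

Let nondecreasing_s : nondecreasing_seq s.
Proof. by apply/nondecreasing_seqP => n; case/andP: (s_incr n). Qed.

Let s_ge0 n : 0 <= s n.
Proof. by rewrite -s0 nondecreasing_s. Qed.

Let s_le_n n : s n <= n%:R.
Proof.
elim: n => [|n IH]; first by rewrite s0.
by rewrite -natr1; case/andP: (s_incr n) => _; lra.
Qed.

Definition sq_time (k : nat) : nat := ex_minn (s_unbounded (k * k)%:R).

Lemma sq_time_ge k : (k * k)%:R <= s (sq_time k).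
Proof. by rewrite /sq_time; case: ex_minnP. Qed.

Lemma sq_time_min k n : (k * k)%:R <= s n -> (sq_time k <= n)%N.
Proof. by rewrite /sq_time; case: ex_minnP => m _ m_min /m_min. Qed.

Lemma sq_time_le k : s (sq_time k) <= (k * k)%:R + 1.
Proof.
rewrite /sq_time; case: ex_minnP => -[|m] _ m_min.
  by rewrite s0 addr_ge0.
have : s m < (k * k)%:R by rewrite ltNge; apply/negP => /m_min; rewrite ltnn.
by case/andP: (s_incr m) => _; lra.
Qed.

Variable C : nat -> nat.
Hypothesis C_mono : {homo C : a b / (a <= b)%N}.
Hypothesis C_close : forall j : nat, exists K, forall k, (K <= k)%N ->
  `|(C (sq_time k))%:R - s (sq_time k)| <= s (sq_time k) / j.+1%:R.

Lemma unbounded_of_close_at_sq_times M : exists n, (M <= C n)%N.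
Proof.
have [K K_close] := C_close 1; pose k := (K + 2 * M)%N.
exists (sq_time k); have := K_close k (leq_addr _ _).
have : (2 * M <= k * k)%N by rewrite /k; nia.
rewrite -(ler_nat R) ler_norml natrM => + /andP[+ _].
by have := sq_time_ge k; rewrite natrM -(ler_nat R); lra.
Qed.

Lemma ratio_cvg_of_close_at_sq_times : (fun n => (C n)%:R / s n) @ \oo --> (1 : R).
Proof.
apply/cvgrPdist_le => e e_gt0.
pose j := Num.truncn (4 / e); pose K0 := (Num.truncn (16 / e)).+1.
have j_gt : 4 / e < j.+1%:R by exact: truncnS_gt.
have K0_gt : 16 / e < K0%:R by exact: truncnS_gt.
have [K K_close] := C_close j.
exists (sq_time (maxn K K0)) => // n /= n_ge.
have k_bound k : (k * k)%:R <= s n -> (k <= n)%N.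
  move=> /le_trans /(_ (s_le_n n)); rewrite ler_nat; nia.
have [k k_le k_max] := ex_maxnP (ex_intro _ 0%N (s_ge0 n) : exists k, (k * k)%:R <= s n) k_bound.
have k_ge : (maxn K K0 <= k)%N.
  by apply: k_max; apply: le_trans (sq_time_ge _) (nondecreasing_s n_ge).
have s_lt : s n < (k.+1 * k.+1)%:R.
  by rewrite ltNge; apply/negP => /k_max; rewrite ltnn.
have tk_le : (sq_time k <= n)%N := sq_time_min k_le.
have n_le : (n <= sq_time k.+1)%N.
  rewrite leqNgt; apply/negP => /ltnW /nondecreasing_s sk_le.
  by have := sq_time_ge k.+1; lra.
have sqR m : (m * m)%:R = m%:R * m%:R :> R by rewrite natrM.
apply: (ratio_sandwich (K0 := K0%:R) (x := k%:R) (y := j.+1%:R)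
  (sa := s (sq_time k)) (sb := s (sq_time k.+1))
  (Ca := (C (sq_time k))%:R) (Cb := (C (sq_time k.+1))%:R)) => //.
all: rewrite ?ler_nat ?ler1n ?natr1 -?sqR ?C_mono ?sq_time_ge ?sq_time_le //.
all: try (apply: K_close); lia.
Qed.

End SquareTimes.

Lemma eventually_records (s : nat -> nat) m :
  (forall n i, (m < n)%N -> (0 < i < n)%N -> (s i < s n)%N) ->
  (exists N : nat, forall n, (N <= n)%N -> (1 <= n)%N ->
     forall i, (1 <= i < n)%N -> s i <> s n) /\
  (forall c : nat, exists M : nat, forall n, (M <= n)%N -> s n <> c) /\
  (exists M : nat, forall c : nat,
     (exists i j, (1 <= i < j)%N /\ s i = c /\ s j = c) -> (c <= M)%N).
Proof.
move=> record; split; [|split].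
- by exists m.+1 => n le_mn _ i lt_in eq_s; move: (record n i le_mn lt_in); rewrite eq_s ltnn.
- move=> c; have [[n0 [lt_mn0 eq_c]]|no_late] := pselect (exists n0, (m < n0)%N /\ s n0 = c).
    exists n0.+1 => n lt_n0n eq_sn.
    have : (s n0 < s n)%N by apply: record; lia.
    by rewrite eq_c eq_sn ltnn.
  by exists m.+1 => n lt_mn eq_sn; apply: no_late; exists n.
- exists (\max_(j < m.+1) s j) => c [i [j [/andP[i_gt0 lt_ij] [eq_si eq_sj]]]].
  have lt_jm : (j < m.+1)%N.
    rewrite ltnNge; apply/negP => le_mj.
    have : (s i < s j)%N by apply: record; lia.
    by rewrite eq_si eq_sj ltnn.
  by rewrite -eq_sj (leq_bigmax (F := fun j : 'I_m.+1 => s j) (Ordinal lt_jm)).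
Qed.

Section TriggerSequences.
Variables (R : realType) (p : nat -> R).
Hypothesis p01 : forall n, 0 <= p n <= 1.

Fixpoint bool_seqs (n : nat) : seq (seq bool) :=
  if n is n'.+1 then [seq rcons bs b | bs <- bool_seqs n', b <- [:: true; false]]
  else [:: [::]].

Lemma size_bool_seqs n bs : bs \in bool_seqs n -> size bs = n.
Proof.
elim: n bs => [|n IH] bs; first by rewrite inE => /eqP->.
by case/allpairsP => -[bs' b] /= [/IH size_bs _ ->]; rewrite size_rcons size_bs.
Qed.

Lemma uniq_bool_seqs n : uniq (bool_seqs n).
Proof.
elim: n => // n IH; apply: allpairs_uniq => //.
by move=> [a b] [c e] _ _ /= /rcons_inj [-> ->].
Qed.

Lemma big_bool_seqsS (f : seq bool -> R) n :
  \sum_(bs <- bool_seqs n.+1) f bs =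
  \sum_(bs <- bool_seqs n) (f (rcons bs true) + f (rcons bs false)).
Proof.
rewrite big_allpairs_dep; apply: eq_bigr => bs _.
by rewrite big_cons big_cons big_nil /= addr0.
Qed.

Definition bern_weight (bs : seq bool) : R :=
  \prod_(i < size bs) (if nth false bs i then p i else 1 - p i).

Lemma bern_weight_rcons bs b :
  bern_weight (rcons bs b) = bern_weight bs * (if b then p (size bs) else 1 - p (size bs)).
Proof.
rewrite /bern_weight size_rcons big_ord_recr /= nth_rcons ltnn eqxx; congr (_ * _).
by apply: eq_bigr => i _; rewrite nth_rcons ltn_ord.
Qed.

Lemma bern_weight_ge0 bs : 0 <= bern_weight bs.
Proof. by apply: prodr_ge0 => i _; have := p01 i; case: ifP => _; lra. Qed.

Definition ntrue (bs : seq bool) : nat := (\sum_(b <- bs) b)%N.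

Lemma ntrue_rcons bs b : ntrue (rcons bs b) = (ntrue bs + b)%N.
Proof. by rewrite /ntrue -cats1 big_cat big_seq1. Qed.

Definition psum (n : nat) : R := \sum_(i < n) p i.

Lemma psumS n : psum n.+1 = psum n + p n.
Proof. by rewrite /psum big_ord_recr. Qed.

Lemma psum0 : psum 0 = 0.
Proof. by rewrite /psum big_ord0. Qed.

Lemma psum_incr n : psum n <= psum n.+1 <= psum n + 1.
Proof. by rewrite psumS; have := p01 n; lra. Qed.

Lemma psum_unbounded : (\sum_(0 <= n <oo) (p n)%:E = +oo)%E ->
  forall x : R, exists n, x <= psum n.
Proof.
move=> sum_p x; apply: contrapT => /forallNP psum_lt.
suff : (\sum_(0 <= n <oo) (p n)%:E <= x%:E)%E by rewrite sum_p.
apply: lime_le; first by apply: is_cvg_nneseries => n _ _; rewrite lee_fin; case/andP: (p01 n).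
apply: nearW => n; rewrite sumEFin lee_fin big_mkord.
by apply/ltW; rewrite ltNge; apply/negP/psum_lt.
Qed.

Lemma sum_bern_weight_mul n (x : R) : \sum_(bs <- bool_seqs n) bern_weight bs * x = x.
Proof.
rewrite -big_distrl /=; suff -> : \sum_(bs <- bool_seqs n) bern_weight bs = 1 by rewrite mul1r.
elim: n => [|n IH]; first by rewrite big_seq1 /bern_weight big_ord0.
rewrite big_bool_seqsS -{}IH; apply: eq_bigr => bs _.
by rewrite !bern_weight_rcons -mulrDr addrC subrK mulr1.
Qed.

Lemma sum_bern_weight n : \sum_(bs <- bool_seqs n) bern_weight bs = 1.
Proof. by rewrite -[RHS](sum_bern_weight_mul n 1); apply: eq_bigr => bs _; rewrite mulr1. Qed.

Lemma sum_bern_weight_nth n b :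
  \sum_(bs <- bool_seqs n.+1 | nth false bs n == b) bern_weight bs =
  if b then p n else 1 - p n.
Proof.
rewrite big_mkcond big_bool_seqsS -[RHS](sum_bern_weight_mul n).
apply: eq_big_seq => bs /size_bool_seqs size_bs.
by rewrite !nth_rcons size_bs ltnn eqxx !bern_weight_rcons size_bs; case: b => /=; ring.
Qed.

Lemma bern_variance_le n :
  \sum_(bs <- bool_seqs n) bern_weight bs * ((ntrue bs)%:R - psum n) ^+ 2 <= psum n.
Proof.
elim: n => [|n IH].
  by rewrite big_seq1 /ntrue /psum big_nil big_ord0 subr0 expr2 !mulr0.
rewrite big_bool_seqsS.
under eq_big_seq => bs /size_bool_seqs size_bs.
  rewrite !bern_weight_rcons !ntrue_rcons size_bs psumS /= addn0 natrD.
  (* the variance grows by p_n (1 - p_n) *)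
  have -> : forall w c s q : R,
      w * q * (c + 1 - (s + q)) ^+ 2 + w * (1 - q) * (c - (s + q)) ^+ 2 =
      w * (c - s) ^+ 2 + w * (q * (1 - q)) by move=> *; ring.
  over.
rewrite big_split /= sum_bern_weight_mul psumS.
have := p01 n; nra.
Qed.

Lemma bern_chebyshev (delta : R) n : 0 < delta -> 0 < psum n ->
  \sum_(bs <- bool_seqs n | delta * psum n < `|(ntrue bs)%:R - psum n|) bern_weight bs
    <= (delta ^+ 2 * psum n)^-1.
Proof.
move=> delta_gt0 psum_gt0; set c := (delta * psum n) ^+ 2.
have c_gt0 : 0 < c by rewrite exprn_gt0 // mulr_gt0.
have dev_ge0 : 0 <= delta * psum n by rewrite ltW // mulr_gt0.
pose dev2 bs := bern_weight bs * (((ntrue bs)%:R - psum n) ^+ 2 / c).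
apply: (@le_trans _ _ (\sum_(bs <- bool_seqs n) dev2 bs)).
  rewrite [X in _ <= X](bigID (fun bs => delta * psum n < `|(ntrue bs)%:R - psum n|)) /=.
  apply: ler_wpDr.
    by apply: sumr_ge0 => bs _; rewrite mulr_ge0 ?bern_weight_ge0 ?divr_ge0 ?sqr_ge0 ?ltW.
  apply: ler_sum => bs far_bs.
  rewrite /dev2 -{1}[bern_weight bs]mulr1 ler_wpM2l ?bern_weight_ge0 //.
  rewrite ler_pdivlMr // mul1r /c -[X in _ <= X](real_normK (num_real _)).
  by rewrite lerXn2r ?nnegrE ?normr_ge0 // ltW.
rewrite /dev2; under eq_bigr do rewrite mulrA.
have -> : (delta ^+ 2 * psum n)^-1 = psum n / c.
  by rewrite /c; field; rewrite !lt0r_neq0.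
by rewrite -mulr_suml ler_wpM2r ?invr_ge0 ?(ltW c_gt0) // bern_variance_le.
Qed.

End TriggerSequences.

Section DrawSequences.
Variables (R : realType) (F : R -> R).
Hypothesis F_gt0 : forall k, (0 < k)%N -> 0 < F k%:R.

Fixpoint nat_seqs (m n : nat) : seq (seq nat) :=
  if n is n'.+1 then [seq s :: t | s <- index_iota 0 m, t <- nat_seqs m n']
  else [:: [::]].

Lemma size_nat_seqs m n ss : ss \in nat_seqs m n -> size ss = n.
Proof.
elim: n ss => [|n IH] ss /=; first by rewrite inE => /eqP->.
by case/allpairsP => -[s t] /= [_ /IH size_t ->] /=; rewrite size_t.
Qed.

Lemma uniq_nat_seqs m n : uniq (nat_seqs m n).
Proof.
elim: n => //= n IH; apply: allpairs_uniq => //; first exact: iota_uniq.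
by move=> [a b] [c e] _ _ /= [-> ->].
Qed.

Lemma big_nat_seqsS (f : seq nat -> R) m n :
  \sum_(ss <- nat_seqs m n.+1) f ss = \sum_(0 <= s < m) \sum_(t <- nat_seqs m n) f (s :: t).
Proof. exact: big_allpairs_dep. Qed.

Lemma sum_urn_path_factor m c K bs :
  (0 < c)%N || head false bs -> (forall j, (0 < j <= c)%N -> (0 < K j)%N) ->
  (c + size bs < m)%N ->
  \sum_(ss <- nat_seqs m (size bs)) urn_path_factor F c K bs ss = 1.
Proof.
elim: bs c K => [|b bs IH] c K c_pos K_pos lt_m; first by rewrite big_seq1.
rewrite (big_nat_seqsS _ m (size bs)); case: b c_pos lt_m => c_pos lt_m.
  under eq_bigr => s _.
    rewrite -mulr_sumr IH ?mulr1 //; last by rewrite /= in lt_m; lia.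
      over.
    by move=> j /andP[j_gt0 j_le]; case: eqP => // /eqP j_neq; apply: K_pos; lia.
  rewrite -big_mkcond big_mkord (big_ord1_eq _ (fun=> 1)) ifT //.
  by rewrite /= in lt_m; lia.
have c_gt0 : (0 < c)%N by rewrite orbF in c_pos.
set Z := \sum_(1 <= j < c.+1) F (K j)%:R.
have Z_gt0 : 0 < Z.
  rewrite /Z big_ltn // ltr_wpDr //; last exact/F_gt0/K_pos.
  rewrite big_nat_cond; apply: sumr_ge0 => j /andP[/andP[j_gt1 j_le] _].
  by apply/ltW/F_gt0/K_pos; lia.
have IHc K' : (forall j, (0 < j <= c)%N -> (0 < K' j)%N) ->
    \sum_(t <- nat_seqs m (size bs)) urn_path_factor F c K' bs t = 1.
  by move=> K'_pos; apply: IH; rewrite ?c_gt0 //; rewrite /= in lt_m; lia.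
under eq_bigr => s _.
  rewrite -mulr_sumr IHc ?mulr1; first over.
  by move=> j j_range; case: eqP => // _; apply: K_pos.
rewrite -big_mkcond /= (big_cat_nat _ (n := c.+1)) //=; last by rewrite /= in lt_m; lia.
rewrite [X in _ + X]big1_seq ?addr0; last first.
  by move=> j /andP[/andP[_ j_le]]; rewrite mem_index_iota; lia.
rewrite big_ltn_cond //= -mulr_suml -[RHS](divff (lt0r_neq0 Z_gt0)); congr (_ / _).
by rewrite big_nat_cond [RHS]big_nat_cond; apply: eq_bigl => j; rewrite ltnS andbb andbT.
Qed.

Lemma urn_path_draw_bounds bs ss c K i :
  urn_path_factor F c K bs ss != 0 -> size bs = size ss -> (i < size bs)%N ->
  [/\ (0 < nth 0 ss i)%N, (nth 0 ss i <= c + \sum_(j < i.+1) nth false bs j)%N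
    & nth false bs i -> nth 0 ss i = (c + \sum_(j < i.+1) nth false bs j)%N].
Proof.
elim: bs ss c K i => [|b bs IH] [|s ss] c K i //= + [size_bs].
case: b; rewrite mulf_eq0 negb_or => /andP[draw_nz rest_nz]; case: i => [_|i lt_i].
- move: draw_nz; rewrite big_ord1 /=; case: (s =P c.+1) => [-> _|]; last by rewrite eqxx.
  by split; lia.
- rewrite big_ord_recl; under eq_bigr do rewrite lift0.
  rewrite /= addnA addn1.
  by have [? ? draw_eq] := IH _ _ _ i rest_nz size_bs lt_i; split => // /draw_eq ->.
- move: draw_nz; rewrite big_ord1 /=; case: ifP => [/andP[s_gt0 s_le] _|]; last by rewrite eqxx.
  by split; lia.
- rewrite big_ord_recl; under eq_bigr do rewrite lift0.
  rewrite /= add0n.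
  by have [? ? draw_eq] := IH _ _ _ i rest_nz size_bs lt_i; split => // /draw_eq ->.
Qed.

End DrawSequences.

Section UrnModel.
Variables (R : realType) (p : nat -> R) (F : R -> R).
Hypotheses (p0 : p 0%N = 1) (p01 : forall n, 0 <= p n <= 1).
Hypothesis F_gt0 : forall k, (0 < k)%N -> 0 < F k%:R.
Variables (d : measure_display) (T : measurableType d) (P : probability T R)
  (B : nat -> T -> bool) (S : nat -> T -> nat).
Hypothesis law : forall bs ss, size bs = size ss ->
  measurable (urn_cylinder B S bs ss) /\
  P (urn_cylinder B S bs ss) = (urn_path_prob p F bs ss)%:E.

Local Notation cylinder x := (urn_cylinder B S x.1 x.2).
Local Notation weight x := (urn_path_prob p F x.1 x.2).

(* Draws of a trajectory of length [n] and positive weight lie in [1..n]. *)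
Definition paths n : seq (seq bool * seq nat) :=
  [seq (bs, ss) | bs <- bool_seqs n, ss <- nat_seqs n.+1 n].

Lemma size_paths n x : x \in paths n -> size x.1 = n /\ size x.2 = n.
Proof.
by case/allpairsP => -[bs ss] [/size_bool_seqs size_bs /size_nat_seqs size_ss ->].
Qed.

Lemma uniq_paths n : uniq (paths n).
Proof.
apply: allpairs_uniq; [exact: uniq_bool_seqs | exact: uniq_nat_seqs |].
by move=> [a b] [c e] _ _ /= [-> ->].
Qed.

Lemma cylinder_law n x : x \in paths n ->
  measurable (cylinder x) /\ P (cylinder x) = (weight x)%:E.
Proof. by case/size_paths => size1 size2; apply: law; rewrite size1 size2. Qed.

Lemma cylinder_prefix bs ss w : urn_cylinder B S bs ss w -> bs = mkseq (B ^~ w) (size bs).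
Proof.
case=> Bw _; apply: (@eq_from_nth _ false); rewrite ?size_mkseq // => i lt_i.
by rewrite nth_mkseq // Bw.
Qed.

Lemma cylinder_inj n : {in paths n &, forall x y w, cylinder x w -> cylinder y w -> x = y}.
Proof.
move=> [bs ss] [bs' ss'] /size_paths[/= sb ss_n] /size_paths[/= sb' ss'_n] w cyl cyl'.
congr pair; first by rewrite (cylinder_prefix cyl) (cylinder_prefix cyl') sb sb'.
case: cyl cyl' => _ Sw [_ Sw']; apply: (@eq_from_nth _ 0%N); first by rewrite ss_n.
by move=> i lt_i; rewrite -Sw // Sw' // ss'_n -ss_n.
Qed.

Lemma sum_urn_path_prob bs :
  \sum_(ss <- nat_seqs (size bs).+1 (size bs)) urn_path_prob p F bs ss = bern_weight p bs.
Proof.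
rewrite /urn_path_prob -mulr_sumr -/(bern_weight p bs).
case: bs => [|[] bs]; first by rewrite big_seq1 mulr1.
  by rewrite sum_urn_path_factor ?mulr1 // => j; lia.
by rewrite /bern_weight big_ord_recl /= p0 subrr !mul0r.
Qed.

(* The event that (B_0, ..., B_{n-1}) satisfies [Q], up to the null set of trajectories
   of weight 0 (see [prefix_eventP]). *)
Definition prefix_event n (Q : pred (seq bool)) : set T :=
  \big[setU/set0]_(x <- paths n | Q x.1 && (weight x != 0)) cylinder x.

Lemma measurable_prefix_event n Q : measurable (prefix_event n Q).
Proof.
rewrite /prefix_event big_seq_cond; apply: bigsetU_measurable => x /andP[x_in _].
by case: (cylinder_law x_in).
Qed.

Lemma prefix_event_prob n Q :
  P (prefix_event n Q) = (\sum_(bs <- bool_seqs n | Q bs) bern_weight p bs)%:E.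
Proof.
rewrite measure_big_setU_seq; last exact: cylinder_inj; last 2 first.
- exact: uniq_paths.
- by move=> x /cylinder_law[].
rewrite big_seq_cond (eq_bigr (fun x => (weight x)%:E)); last by move=> x /andP[/cylinder_law[]].
rewrite -big_seq_cond sumEFin big_mkcondr /=; congr EFin.
rewrite (eq_bigr (fun x => weight x)); last by move=> x _; case: ifPn => // /negPn /eqP ->.
rewrite big_mkcond big_allpairs [RHS]big_mkcond; apply: eq_big_seq => bs /size_bool_seqs <-.
by case: (Q bs) => /=; [exact: sum_urn_path_prob | rewrite big1].
Qed.

Lemma ae_prefix_event : {ae P, forall w n, prefix_event n predT w}.
Proof.
apply: ae_foralln => n; exists (~` prefix_event n predT); split => //.
  exact/measurableC/measurable_prefix_event.
transitivity (1 - P (prefix_event n predT))%E.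
  exact/probability_setC/measurable_prefix_event.
by rewrite prefix_event_prob (eq_bigl xpredT) // sum_bern_weight subee.
Qed.

Lemma typical_path n w : prefix_event n predT w ->
  exists x, [/\ x \in paths n, urn_path_factor F 0 (fun=> 0%N) x.1 x.2 != 0 & cylinder x w].
Proof.
rewrite /prefix_event -bigcup_seq_cond => -[x /andP[x_in /= nz] cyl].
by exists x; split => //; move: nz; rewrite mulf_eq0 negb_or => /andP[].
Qed.

Lemma prefix_eventP n Q w : prefix_event n predT w ->
  prefix_event n Q w <-> Q (mkseq (B ^~ w) n).
Proof.
rewrite /prefix_event -!bigcup_seq_cond => -[x /andP[x_in /= nz] cyl]; split.
  case=> y /andP[y_in /andP[Qy _]] cyl_y; have [<- _] := size_paths y_in.
  by rewrite -(cylinder_prefix cyl_y).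
have [size_x1 _] := size_paths x_in.
by move=> Qx; exists x => //=; rewrite x_in nz andbT (cylinder_prefix cyl) size_x1.
Qed.

Lemma ncolorsS n w : ncolors B n.+1 w = (ncolors B n w + B n w)%N.
Proof. by rewrite /ncolors big_ord_recr. Qed.

Lemma ncolors_mono w : {homo ncolors B ^~ w : a b / (a <= b)%N}.
Proof.
move=> a b /subnK <-; elim: (b - a)%N => [|k IH]; first by rewrite add0n.
by rewrite addSn ncolorsS; lia.
Qed.

Lemma ncolors_le m w : (forall k, (m <= k)%N -> ~~ B k w) -> forall n, (ncolors B n w <= m)%N.
Proof.
move=> no_trig n; suff : (ncolors B n w <= minn n m)%N by lia.
elim: n => [|n IH]; first by rewrite /ncolors big_ord0.
rewrite ncolorsS; case: (leqP m n) => [le_mn|lt_nm]; last by have := leq_b1 (B n w); lia.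
by rewrite (negbTE (no_trig n le_mn)); lia.
Qed.

Lemma ncolors_mkseq n w : ncolors B n w = ntrue (mkseq (B ^~ w) n).
Proof. by rewrite /ntrue big_map -[n in iota 0 n]subn0 big_mkord. Qed.

Lemma draw_bounds w : (forall n, prefix_event n predT w) -> forall m, (0 < m)%N ->
  [/\ (0 < S m w)%N, (S m w <= ncolors B m w)%N & (B m.-1 w -> S m w = ncolors B m w)].
Proof.
move=> typ_w m m_gt0.
have [[bs ss] [/size_paths[/= size_bs size_ss] nz [Bw Sw]]] := typical_path (typ_w m).
have lt_m : (m.-1 < size bs)%N by rewrite size_bs prednK.
have [] := urn_path_draw_bounds nz (etrans size_bs (esym size_ss)) lt_m.
have eS : S m w = nth 0 ss m.-1 by rewrite -Sw ?prednK // size_ss; lia.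
have eC : ncolors B m w = (\sum_(j < m.-1.+1) nth false bs j)%N.
  by rewrite prednK //; apply: eq_bigr => i _; rewrite Bw // size_bs.
by rewrite eS eC Bw // !add0n.
Qed.

Lemma borel_cantelli_prefix (N : nat -> nat) (Q : nat -> pred (seq bool)) :
  (\sum_(0 <= k <oo) P (prefix_event (N k) (Q k)) < +oo)%E ->
  {ae P, forall w, exists m, forall k, (m <= k)%N -> ~~ Q k (mkseq (B ^~ w) (N k))}.
Proof.
move=> sum_lt; have := ae_eventually_notin (fun k => measurable_prefix_event (N k) (Q k)) sum_lt.
move: ae_prefix_event; apply: filterS2 => w typ_w [m m_not]; exists m => k le_mk.
by apply/negP => /(prefix_eventP _ (typ_w (N k))); apply: m_not.
Qed.

Lemma prefix_event_nth_prob k b :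
  P (prefix_event k.+1 (fun bs => nth false bs k == b)) = (if b then p k else 1 - p k)%:E.
Proof. by rewrite prefix_event_prob sum_bern_weight_nth. Qed.

Lemma finitely_many_colors : (\sum_(0 <= n <oo) (p n)%:E < +oo)%E ->
  {ae P, forall w, exists M : nat, forall n, (ncolors B n w <= M)%N}.
Proof.
move=> sum_p; have := @borel_cantelli_prefix succn (fun k bs => nth false bs k == true).
rewrite (eq_eseriesr (fun k _ => prefix_event_nth_prob k true)) => /(_ sum_p).
apply: filterS => w [m no_trig]; exists m; apply: ncolors_le => k /no_trig.
by rewrite nth_mkseq // eqb_id.
Qed.

Lemma eventually_triggers : (\sum_(1 <= n <oo) (1 - p n)%:E < +oo)%E ->
  {ae P, forall w, exists m, forall k, (m <= k)%N -> B k w}.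
Proof.
move=> sum_q; have := @borel_cantelli_prefix succn (fun k bs => nth false bs k == false).
rewrite (eq_eseriesr (fun k _ => prefix_event_nth_prob k false)) /=.
rewrite (nneseries_split 0 1) ?add0n ?big_nat1 ?p0 ?subrr ?add0e => [/(_ sum_q)|k _]; last first.
  by have := p01 k; rewrite lee_fin; lra.
by apply: filterS => w [m trig]; exists m => k /trig; rewrite nth_mkseq // eqbF_neg negbK.
Qed.

Lemma draws_are_records w m :
  (forall n, prefix_event n predT w) -> (forall k, (m <= k)%N -> B k w) ->
  forall n i, (m < n)%N -> (0 < i < n)%N -> (S i w < S n w)%N.
Proof.
move=> typ_w trig n i lt_mn /andP[i_gt0 lt_in].
have n_gt0 : (0 < n)%N by lia.
have Bn : B n.-1 w by apply: trig; lia.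
have [_ _ /(_ Bn) ->] := draw_bounds typ_w n_gt0.
have [_ Si _] := draw_bounds typ_w i_gt0.
rewrite -(prednK n_gt0) ncolorsS Bn addn1 ltnS (leq_trans Si) // ncolors_mono //.
by rewrite -ltnS prednK.
Qed.

Lemma ncolors_close_at_sq_times (unb : forall x : R, exists n, x <= psum p n) (j : nat) :
  {ae P, forall w, exists K, forall k, (K <= k)%N ->
    `|(ncolors B (sq_time unb k) w)%:R - psum p (sq_time unb k)| <=
      psum p (sq_time unb k) / j.+1%:R}.
Proof.
pose t := sq_time unb; pose delta : R := j.+1%:R^-1.
pose far k bs := delta * psum p (t k) < `|(ntrue bs)%:R - psum p (t k)|.
have far_summable : (\sum_(0 <= k <oo) P (prefix_event (t k) (far k)) < +oo)%E.
  apply: (@nneseries_inv_sq_lty _ _ (j.+1%:R ^+ 2)) => k; first exact: measure_ge0.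
  case: k => [|k].
    apply: le_trans (probability_le1 _ (measurable_prefix_event _ _)) _.
    by rewrite lee_fin /= divr1 exprn_ege1 // ler1n.
  have k_sq_le : (k.+1 * k.+1)%:R <= psum p (t k.+1) by exact: sq_time_ge.
  have psum_gt0 : 0 < psum p (t k.+1) by apply: lt_le_trans k_sq_le; rewrite ltr0n.
  rewrite prefix_event_prob lee_fin (le_trans (bern_chebyshev p01 _ psum_gt0)) ?invr_gt0 //.
  rewrite (maxn_idPr _) ?muln_gt0 // /delta exprVn invfM invrK.
  by rewrite ler_pM2l ?exprn_gt0 // lef_pV2 ?posrE // ltr0n muln_gt0.
apply: filterS (borel_cantelli_prefix far_summable) => w [K K_near].
by exists K => k /K_near; rewrite /far /delta -ncolors_mkseq -leNgt [_^-1 * _]mulrC.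
Qed.

Lemma ncolors_lln : (\sum_(0 <= n <oo) (p n)%:E = +oo)%E ->
  {ae P, forall w, forall M : nat, exists n, (M <= ncolors B n w)%N} /\
  {ae P, forall w, (fun n => (ncolors B n w)%:R / psum p n) @ \oo --> (1 : R)}.
Proof.
move=> sum_p; have unb := psum_unbounded p01 sum_p.
have close := ae_foralln (ncolors_close_at_sq_times unb).
split; apply: filterS close => w w_close; first exact: unbounded_of_close_at_sq_times w_close.
by have := ratio_cvg_of_close_at_sq_times (psum0 p) (psum_incr p01) (ncolors_mono w) w_close.
Qed.

End UrnModel.

Unset Implicit Arguments.
Set Strict Implicit.

Theorem theorem3p1 (R : realType) (d : measure_display) (T : measurableType d)
  (P : probability T R) (p : nat -> R) (F : R -> R)
  (B : nat -> T -> bool) (S : nat -> T -> nat)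
  (hp0 : p 0%N = 1) (hp : forall n, (1 <= n)%N -> 0 < p n < 1)
  (hF1 : 0 < F 1) (hFinc : forall x y, 1 <= x -> x < y -> F x < F y)
  (hlaw : forall (bs : seq bool) (ss : seq nat), size bs = size ss ->
     measurable (urn_cylinder B S bs ss) /\
     P (urn_cylinder B S bs ss) = (urn_path_prob p F bs ss)%:E) :
  ((\sum_(0 <= n <oo) (p n)%:E < +oo)%E ->
     {ae P, forall w, exists M : nat, forall n, (ncolors B n w <= M)%N}) /\
  ((\sum_(0 <= n <oo) (p n)%:E = +oo)%E ->
     {ae P, forall w, forall M : nat, exists n, (M <= ncolors B n w)%N} /\
     {ae P, forall w, (fun n => (ncolors B n w)%:R / \sum_(i < n) p i) @ \oo --> (1 : R)} /\
     ((\sum_(1 <= n <oo) (1 - p n)%:E < +oo)%E ->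
       {ae P, forall w,
         (exists N : nat, forall n, (N <= n)%N -> (1 <= n)%N ->
            forall m, (1 <= m < n)%N -> S m w <> S n w) /\
         (forall c : nat, exists M : nat, forall n, (M <= n)%N -> S n w <> c) /\
         (exists M : nat, forall c : nat,
            (exists i j, (1 <= i < j)%N /\ S i w = c /\ S j w = c) -> (c <= M)%N)})).
Proof.
have p01 n : 0 <= p n <= 1.
  case: n => [|n]; first by rewrite hp0 ler01 lexx.
  by case/andP: (hp n.+1 isT) => p_gt0 p_lt1; rewrite !ltW.
have F_gt0 k : (0 < k)%N -> 0 < F k%:R.
  case: k => [//|[_|k _]]; first by rewrite mulr1n.
  by apply: lt_trans hF1 (hFinc _ _ _ _); rewrite ?lexx // ltr1n.
split; first exact: (finitely_many_colors hp0 F_gt0 hlaw).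
move=> sum_p; have [unbounded ratio] := ncolors_lln hp0 p01 F_gt0 hlaw sum_p.
split => //; split => // sum_q.
move: (ae_prefix_event hp0 F_gt0 hlaw) (eventually_triggers hp0 p01 F_gt0 hlaw sum_q).
apply: filterS2 => w typ_w [m trig].
exact/eventually_records/(draws_are_records typ_w trig).
Qed.
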